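(* The proof system ${\bf K^\boxplus}$ is sound and strongly complete with respect to the class of all bimodal frames: for every set $\Gamma\subseteq\mathcal{L}(\boxplus)$ and $\phi\in\mathcal{L}(\boxplus)$, $\Gamma\vdash_{{\bf K^\boxplus}}\phi$ iff $\phi$ is true at every state of every bimodal model at which all formulas of $\Gamma$ are true.
   Context: Fix a nonempty set $\mathbf{P}$ of propositional variables. A bimodal model is $\langle S,R_1,R_2,V\rangle$ with $S$ nonempty, $R_1,R_2\subseteq S\times S$, $V:\mathbf{P}\to\mathcal{P}(S)$. Write $R_i(s)=\{t\mid sR_it\}$. $\mathcal{L}(\boxplus):\ \phi::=p\mid\neg\phi\mid(\phi\wedge\phi)\mid\boxplus\phi$ (other connectives, $\top,\bot$ abbreviations). Truth: $\mathcal{M},s\vDash\boxplus\phi$ iff ($\mathcal{M},t\vDash\phi$ for all $t\in R_1(s)$) or ($\mathcal{M},u\vDash\neg\phi$ for all $u\in R_2(s)$); atoms and Booleans as usual. ${\bf K^\boxplus}$ has axioms: all instances of propositional tautologies; CON: $\boxplus\phi\wedge\boxplus\psi\to\boxplus(\phi\wedge\psi)\wedge\boxplus(\phi\vee\psi)$; DIS: $\boxplus\phi\to\boxplus(\phi\vee\psi)\vee\boxplus(\phi\wedge\chi)$; and rules: modus ponens; RN: from $\phi$ infer $\boxplus\phi\wedge\boxplus\neg\phi$; RE: from $\phi\leftrightarrow\psi$ infer $\boxplus\phi\leftrightarrow\boxplus\psi$. $\Gamma\vdash\phi$ means there are finitely many $\gamma_1,\dots,\gamma_n\in\Gamma$ with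 $\gamma_1\wedge\dots\wedge\gamma_n\to\phi$ a theorem. *)

From Stdlib Require Import List.
Import ListNotations.

Section Logic.
Variable P : Type.

Inductive form : Type :=
| Var : P -> form
| Neg : form -> form
| And : form -> form -> form
| Bplus : form -> form.

Definition Or (a b : form) : form := Neg (And (Neg a) (Neg b)).
Definition Imp (a b : form) : form := Neg (And a (Neg b)).
Definition Iff (a b : form) : form := And (Imp a b) (Imp b a).

(* Propositional (Boolean) evaluation: boxplus-formulas are treated as atoms. *)
Fixpoint peval (v : P -> bool) (w : form -> bool) (f : form) : bool :=
  match f with
  | Var p => v p
  | Neg a => negb (peval v w a)
  | And a b => andb (peval v w a) (peval v w b)
  | Bplus a => w (Bplus a)
  end.

Definition taut (f : form) : Prop :=
  forall (v : P -> bool) (w : form -> bool), peval v w f = true.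

Inductive thm : form -> Prop :=
| Ax_taut : forall f, taut f -> thm f
| Ax_CON : forall a b,
    thm (Imp (And (Bplus a) (Bplus b))
             (And (Bplus (And a b)) (Bplus (Or a b))))
| Ax_DIS : forall a b c,
    thm (Imp (Bplus a) (Or (Bplus (Or a b)) (Bplus (And a c))))
| R_MP : forall a b, thm a -> thm (Imp a b) -> thm b
| R_N : forall a, thm a -> thm (And (Bplus a) (Bplus (Neg a)))
| R_E : forall a b, thm (Iff a b) -> thm (Iff (Bplus a) (Bplus b)).

Fixpoint bigAnd (g : form) (l : list form) : form :=
  match l with
  | [] => g
  | g' :: l' => And g (bigAnd g' l')
  end.

Definition derives (Gamma : form -> Prop) (phi : form) : Prop :=
  thm phi \/
  exists (g : form) (l : list form),
    (forall x, In x (g :: l) -> Gamma x) /\ thm (Imp (bigAnd g l) phi).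

Record model : Type := {
  st : Type;
  st_inh : st;
  R1 : st -> st -> Prop;
  R2 : st -> st -> Prop;
  val : P -> st -> Prop
}.

Fixpoint sat (M : model) (s : st M) (f : form) : Prop :=
  match f with
  | Var p => val M p s
  | Neg a => ~ sat M s a
  | And a b => sat M s a /\ sat M s b
  | Bplus a => (forall t, R1 M s t -> sat M t a) \/
               (forall u, R2 M s u -> ~ sat M u a)
  end.

Definition conseq (Gamma : form -> Prop) (phi : form) : Prop :=
  forall (M : model) (s : st M), (forall g, Gamma g -> sat M s g) -> sat M s phi.

End Logic.

Arguments Var {P}. Arguments Neg {P}. Arguments And {P}. Arguments Bplus {P}.

From Pilot Require Import Defs.
From Stdlib Require Import List Classical ClassicalDescription.
From mathcomp Require classical_sets.
Import ListNotations.

(* Soundness is an induction on theorems: tautologies are valid because a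
   state induces a Boolean valuation of atoms and ⊞-formulas, and CON, DIS,
   RN, RE are checked directly against the truth clause of ⊞.

   Completeness is a canonical-model construction.  For a maximal consistent set X put
     forced1 X  = {a | ⊞a ∈ X and ⊞(a ∨ b) ∈ X for all b}   (a filter),
     refuted2 X = {a | ⊞a ∈ X and ⊞(a ∧ c) ∈ X for all c}   (an ideal),
   and let X R1 Y iff forced1 X ⊆ Y, X R2 Y iff ¬a ∈ Y for all a ∈ refuted2 X.
   CON makes forced1 X a filter and refuted2 X an ideal, which yields
   witnessing successors; DIS shows that every ⊞a ∈ X lies in one of the two.
   Hence ⊞a ∈ X iff the ⊞-clause holds in the canonical model (truth lemma),
   and a set Γ ∪ {¬φ} that is consistent is satisfied at some state. *)

Section KBoxplus.
Variable P : Type.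
Variable p0 : P.

Notation form := (form P).
Notation thm := (thm P).
Notation peval := (peval P).
Notation Imp := (Imp P).
Notation Or := (Or P).
Notation Iff := (Iff P).
Notation model := (model P).
Notation sat := (sat P).

(* Constants and finite conjunctions; [Top] needs some atom [p0]. *)
Definition Top : form := Neg (And (Var p0) (Neg (Var p0))).
Definition Bot : form := Neg Top.

Fixpoint bigconj (l : list form) : form :=
  match l with
  | [] => Top
  | a :: l' => And a (bigconj l')
  end.

(* Proves a goal [forall v w, ... -> peval v w c = true] by case analysis on
   the truth values of the Boolean subformulas involved. *)
Ltac bool_tauto :=
  let v := fresh "v" in let w := fresh "w" in
  intros v w; unfold Or, Imp, Iff, Bot, Top in *; simpl;
  repeat (match goal with
   | |- context [peval ?v ?w ?x] => destruct (peval v w x)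
   | |- context [?w (Bplus ?x)] => destruct (w (Bplus x))
   | |- context [?v p0] => destruct (v p0)
   end); simpl; intros; try reflexivity; try discriminate.

Lemma thm_taut2 a b c : thm a -> thm b ->
  (forall v w, peval v w a = true -> peval v w b = true -> peval v w c = true) ->
  thm c.
Proof.
  intros Ha Hb H. apply (R_MP _ b c Hb), (R_MP _ a _ Ha), Ax_taut.
  intros v w; unfold Imp; simpl. specialize (H v w).
  destruct (peval v w a), (peval v w b), (peval v w c); auto.
Qed.

Lemma thm_taut1 a c : thm a ->
  (forall v w, peval v w a = true -> peval v w c = true) -> thm c.
Proof. intros Ha H. apply (thm_taut2 a a c Ha Ha). auto. Qed.

Lemma peval_conj_app v w l1 l2 :
  peval v w (bigconj (l1 ++ l2)) = andb (peval v w (bigconj l1)) (peval v w (bigconj l2)).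
Proof.
  induction l1 as [|a l IH]; simpl.
  - destruct (v p0); reflexivity.
  - rewrite IH. destruct (peval v w a); reflexivity.
Qed.

Lemma peval_bigAnd v w g l : peval v w (bigAnd P g l) = peval v w (bigconj (g :: l)).
Proof.
  revert g; induction l as [|g' l IH]; intros g; simpl.
  - destruct (peval v w g), (v p0); reflexivity.
  - rewrite IH. reflexivity.
Qed.

Definition deducible (X : form -> Prop) (a : form) : Prop :=
  exists l, (forall x, In x l -> X x) /\ thm (Imp (bigconj l) a).

Lemma deducible_thm X a : thm a -> deducible X a.
Proof.
  intros H; exists []; split; [simpl; tauto|].
  apply (thm_taut1 _ _ H); bool_tauto.
Qed.

Lemma deducible_in X a : X a -> deducible X a.
Proof.
  intros H; exists [a]; split; [simpl; intros x [<-|[]]; auto|].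
  apply Ax_taut; bool_tauto.
Qed.

Lemma deducible_taut2 X a b c : deducible X a -> deducible X b ->
  (forall v w, peval v w a = true -> peval v w b = true -> peval v w c = true) ->
  deducible X c.
Proof.
  intros [l1 [H1 T1]] [l2 [H2 T2]] H.
  exists (l1 ++ l2); split.
  - intros x Hx; apply in_app_or in Hx; destruct Hx; auto.
  - apply (thm_taut2 _ _ _ T1 T2). intros v w.
    specialize (H v w). unfold Imp; simpl. rewrite peval_conj_app.
    destruct (peval v w (bigconj l1)), (peval v w (bigconj l2)), (peval v w a),
      (peval v w b), (peval v w c); simpl in *; auto.
Qed.

Lemma deducible_taut1 X a c : deducible X a ->
  (forall v w, peval v w a = true -> peval v w c = true) -> deducible X c.
Proof. intros Ha H. apply (deducible_taut2 X a a c Ha Ha). auto. Qed.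

Lemma deducible_mono (X Y : form -> Prop) a :
  (forall x, X x -> Y x) -> deducible X a -> deducible Y a.
Proof. intros S [l [H T]]; exists l; split; auto. Qed.

(* [derives] of [Defs] agrees with [deducible]: the only difference is that
   [derives] writes the empty conjunction as the theorem itself. *)
Lemma derives_deducible Gamma phi : derives P Gamma phi <-> deducible Gamma phi.
Proof.
  split.
  - intros [H|[g [l [H T]]]].
    + apply deducible_thm; auto.
    + exists (g :: l); split; auto. apply (thm_taut1 _ _ T). intros v w.
      unfold Defs.Imp; simpl. rewrite peval_bigAnd. simpl. auto.
  - intros [[|g l] [H T]].
    + left. apply (thm_taut2 _ _ _ T (Ax_taut P Top ltac:(bool_tauto))). bool_tauto.
    + right; exists g, l; split; auto. apply (thm_taut1 _ _ T). intros v w.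
      unfold Defs.Imp; simpl. rewrite peval_bigAnd. simpl. auto.
Qed.

Lemma discharge_list (X : form -> Prop) psi l :
  (forall x, In x l -> X x \/ x = psi) ->
  exists l', (forall x, In x l' -> X x) /\ thm (Imp (And (bigconj l') psi) (bigconj l)).
Proof.
  induction l as [|a l IH]; intros H.
  - exists []; split; [simpl; tauto|]. apply Ax_taut; bool_tauto.
  - destruct IH as [l' [H1 T1]]. { intros x Hx; apply H; simpl; auto. }
    destruct (H a (in_eq a l)) as [Ha| ->].
    + exists (a :: l'); split.
      * simpl; intros x [<-|Hx]; auto.
      * apply (thm_taut1 _ _ T1); bool_tauto.
    + exists l'; split; auto. apply (thm_taut1 _ _ T1); bool_tauto.
Qed.

Lemma deduction (X : form -> Prop) psi c :
  deducible (fun x => X x \/ x = psi) c -> deducible X (Imp psi c).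
Proof.
  intros [l [H T]]. destruct (discharge_list X psi l H) as [l' [H' T']].
  exists l'; split; auto. apply (thm_taut2 _ _ _ T T'); bool_tauto.
Qed.

(* A state induces a Boolean valuation of atoms and ⊞-formulas agreeing with
   [sat]; hence every tautology is valid. *)
Definition decide (Q : Prop) : bool :=
  if excluded_middle_informative Q then true else false.

Lemma decide_true Q : decide Q = true <-> Q.
Proof.
  unfold decide; destruct (excluded_middle_informative Q); split; intros; auto;
    discriminate.
Qed.

Lemma peval_sat (M : model) (s : st P M) f :
  peval (fun p => decide (val P M p s)) (fun g => decide (sat M s g)) f = true
  <-> sat M s f.
Proof.
  induction f as [p|a IH|a IHa b IHb|a]; simpl.
  - apply decide_true.
  - rewrite <- IH. destruct (peval _ _ a); simpl; intuition discriminate.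
  - rewrite <- IHa, <- IHb.
    destruct (peval _ _ a), (peval _ _ b); simpl; intuition discriminate.
  - apply (decide_true (sat M s (Bplus a))).
Qed.

Lemma sat_imp (M : model) s a b : sat M s (Imp a b) <-> (sat M s a -> sat M s b).
Proof. simpl; split; [intros H Ha; apply NNPP; tauto|tauto]. Qed.

Lemma sat_or (M : model) s a b : sat M s (Or a b) <-> sat M s a \/ sat M s b.
Proof. simpl; split; [intros H; apply NNPP; tauto|tauto]. Qed.

Lemma valid_CON (M : model) s a b : sat M s (Bplus a) -> sat M s (Bplus b) ->
  sat M s (Bplus (And a b)) /\ sat M s (Bplus (Or a b)).
Proof. simpl; firstorder. Qed.

Lemma valid_DIS (M : model) s a b c : sat M s (Bplus a) ->
  sat M s (Bplus (Or a b)) \/ sat M s (Bplus (And a c)).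
Proof. simpl; firstorder. Qed.

Lemma valid_RE (M : model) s a b : (forall t, sat M t a <-> sat M t b) ->
  sat M s (Bplus a) -> sat M s (Bplus b).
Proof. intros E; simpl; setoid_rewrite E; tauto. Qed.

Lemma soundness f : thm f -> forall (M : model) s, sat M s f.
Proof.
  induction 1 as [f Ht|a b|a b c|a b _ IHa _ IHab|a _ IH|a b _ IH]; intros M s;
    try rewrite sat_imp.
  - apply peval_sat, Ht.
  - intros [Ha Hb]; split; apply valid_CON; auto.
  - rewrite sat_or; apply valid_DIS.
  - apply (proj1 (sat_imp M s a b) (IHab M s)), IHa.
  - split; [left; auto|right; intros u _ Hn; apply Hn, IH].
  - assert (E : forall t, sat M t a <-> sat M t b).
    { intros t; specialize (IH M t); simpl in IH; split; intros; apply NNPP; tauto. }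
    split; apply sat_imp; apply valid_RE; firstorder.
Qed.

Lemma sat_bigAnd (M : model) s g l :
  (forall x, In x (g :: l) -> sat M s x) -> sat M s (bigAnd P g l).
Proof.
  revert g; induction l as [|g' l IH]; intros g H; simpl.
  - apply H; simpl; auto.
  - split; [apply H; simpl; auto|]. apply IH. intros x Hx; apply H; simpl; auto.
Qed.

Lemma sound_derives Gamma phi : derives P Gamma phi -> conseq P Gamma phi.
Proof.
  intros [H|[g [l [H T]]]] M s HG.
  - apply soundness; auto.
  - apply (proj1 (sat_imp M s _ _) (soundness _ T M s)).
    apply sat_bigAnd. intros x Hx; apply HG, H, Hx.
Qed.

Definition consistent (X : form -> Prop) : Prop := ~ deducible X Bot.

Definition maxcons (M : form -> Prop) : Prop :=
  consistent M /\ forall psi, consistent (fun x => M x \/ x = psi) -> M psi.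

Section MaxCons.
Variable M : form -> Prop.
Hypothesis HM : maxcons M.

Lemma maxcons_ded a : deducible M a -> M a.
Proof.
  intros H. apply (proj2 HM). intros Hc. apply deduction in Hc.
  apply (proj1 HM). apply (deducible_taut2 _ _ _ _ H Hc). bool_tauto.
Qed.

Lemma maxcons_thm a : thm a -> M a.
Proof. intros; apply maxcons_ded, deducible_thm; auto. Qed.

Lemma maxcons_taut1 a c : M a ->
  (forall v w, peval v w a = true -> peval v w c = true) -> M c.
Proof. intros Ha H; apply maxcons_ded, (deducible_taut1 _ _ _ (deducible_in _ _ Ha) H). Qed.

Lemma maxcons_taut2 a b c : M a -> M b ->
  (forall v w, peval v w a = true -> peval v w b = true -> peval v w c = true) -> M c.
Proof.
  intros Ha Hb H.
  apply maxcons_ded, (deducible_taut2 _ _ _ _ (deducible_in _ _ Ha) (deducible_in _ _ Hb) H).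
Qed.

Lemma maxcons_neg a : M (Neg a) <-> ~ M a.
Proof.
  split.
  - intros H1 H2. apply (proj1 HM), deducible_in, (maxcons_taut2 _ _ _ H1 H2). bool_tauto.
  - intros H. apply (proj2 HM). intros Hc. apply H, (proj2 HM).
    intros Hc2. apply deduction in Hc, Hc2.
    apply (proj1 HM), (deducible_taut2 _ _ _ _ Hc Hc2). bool_tauto.
Qed.

Lemma maxcons_and a b : M (And a b) <-> M a /\ M b.
Proof.
  split.
  - intros H; split; apply (maxcons_taut1 _ _ H); bool_tauto.
  - intros [Ha Hb]; apply (maxcons_taut2 _ _ _ Ha Hb); bool_tauto.
Qed.

Lemma maxcons_or a b : M (Or a b) -> M a \/ M b.
Proof.
  intros H. apply NNPP; intros Hn.
  apply maxcons_neg in H; apply H, maxcons_and.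
  split; apply maxcons_neg; tauto.
Qed.

End MaxCons.

Lemma list_in_chain {T : Type} (S : T -> Prop) (F : (T -> Prop) -> Prop)
  (chain : forall X Y, F X -> F Y -> (forall t, X t -> Y t) \/ (forall t, Y t -> X t))
  (l : list T) :
  (forall x, In x l -> S x \/ exists2 X, F X & X x) ->
  (forall x, In x l -> S x) \/ exists X, F X /\ forall x, In x l -> S x \/ X x.
Proof.
  induction l as [|a l IH]; intros Hl; [left; simpl; tauto|].
  destruct IH as [IH|[X0 [FX0 IH]]]; [intros x Hx; apply Hl; simpl; auto| |];
    destruct (Hl a (in_eq a l)) as [Ha|[X1 FX1 Ha]].
  - left; intros x [<-|Hx]; auto.
  - right; exists X1; split; auto. intros x [<-|Hx]; auto.
  - right; exists X0; split; auto. intros x [<-|Hx]; auto.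
  - destruct (chain X0 X1 FX0 FX1) as [E|E].
    + right; exists X1; split; auto. intros x [<-|Hx]; auto.
      destruct (IH x Hx); auto.
    + right; exists X0; split; auto. intros x [<-|Hx]; auto.
Qed.

(* Lindenbaum's lemma, by Zorn's lemma on the sets [A] with [S ∪ A]
   consistent: consistency has finite character. *)
Lemma lindenbaum (S : form -> Prop) : consistent S ->
  exists M, maxcons M /\ forall x, S x -> M x.
Proof.
  intros HS.
  destruct (classical_sets.Zorn_bigcup (P := fun A => consistent (fun x => S x \/ A x)))
    as [A [PA Amax]].
  - intros F FP chain [l [Hl T]].
    destruct (list_in_chain S F chain l Hl) as [K|[X [FX K]]].
    + apply HS; exists l; auto.
    + apply (FP X FX); exists l; auto.
  - exists (fun x => S x \/ A x); split; [split|]; auto.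
    intros psi Hc. right. apply NNPP; intros Hn.
    apply (Amax (fun x => A x \/ x = psi)).
    + split; [intros x; simpl; auto|]. intros Sub; apply Hn, Sub; auto.
    + intros Hd; apply Hc; revert Hd; apply deducible_mono. intros x [Hx|[Hx|Hx]]; auto.
Qed.

(* For ⊞a ∈ X, the two ways the ⊞-clause can hold: [forced1 X a] means [a]
   is to hold at every R1-successor of X. *)
Definition forced1 (X : form -> Prop) (a : form) : Prop :=
  X (Bplus a) /\ forall b, X (Bplus (Or a b)).

(* [refuted2 X a] means [a] is to fail at every R2-successor of X. *)
Definition refuted2 (X : form -> Prop) (a : form) : Prop :=
  X (Bplus a) /\ forall c, X (Bplus (And a c)).

Section BoxParts.
Variable X : form -> Prop.
Hypothesis HX : maxcons X.

Lemma box_congr a b : thm (Iff a b) -> X (Bplus a) -> X (Bplus b).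
Proof.
  intros T H. apply (maxcons_taut2 X HX _ _ _ H (maxcons_thm X HX _ (R_E P a b T))).
  bool_tauto.
Qed.

Lemma box_con a b : X (Bplus a) -> X (Bplus b) ->
  X (Bplus (And a b)) /\ X (Bplus (Or a b)).
Proof.
  intros Ha Hb. apply (maxcons_and X HX).
  apply (maxcons_taut2 X HX _ _ _ (proj2 (maxcons_and X HX _ _) (conj Ha Hb))
           (maxcons_thm X HX _ (Ax_CON P a b))).
  bool_tauto.
Qed.

Lemma box_dis a b c : X (Bplus a) -> X (Bplus (Or a b)) \/ X (Bplus (And a c)).
Proof.
  intros Ha. apply (maxcons_or X HX).
  apply (maxcons_taut2 X HX _ _ _ Ha (maxcons_thm X HX _ (Ax_DIS P a b c))).
  bool_tauto.
Qed.

Lemma box_top_bot : X (Bplus Top) /\ X (Bplus Bot).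
Proof.
  apply (maxcons_and X HX), (maxcons_thm X HX), R_N, Ax_taut. bool_tauto.
Qed.

Lemma forced1_up f a : forced1 X f -> thm (Imp f a) -> forced1 X a.
Proof.
  intros [H1 H2] T; split.
  - apply (box_congr (Or f a)); auto. apply (thm_taut1 _ _ T); bool_tauto.
  - intros b; apply (box_congr (Or f (Or a b))); auto.
    apply (thm_taut1 _ _ T); bool_tauto.
Qed.

Lemma forced1_and a b : forced1 X a -> forced1 X b -> forced1 X (And a b).
Proof.
  intros [Ha Ha'] [Hb Hb']; split; [apply box_con; auto|].
  intros c. apply (box_congr (And (Or a c) (Or b c))); [apply Ax_taut; bool_tauto|].
  apply box_con; auto.
Qed.

Lemma forced1_conj l : (forall x, In x l -> forced1 X x) -> forced1 X (bigconj l).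
Proof.
  induction l as [|a l IH]; intros H; simpl.
  - split; [apply box_top_bot|]. intros b.
    apply (box_congr Top); [apply Ax_taut; bool_tauto|apply box_top_bot].
  - apply forced1_and; [apply H; simpl; auto|apply IH; intros; apply H; simpl; auto].
Qed.

Lemma forced1_closed a : deducible (forced1 X) a -> forced1 X a.
Proof. intros [l [Hl T]]. apply (forced1_up (bigconj l)); auto. apply forced1_conj; auto. Qed.

Lemma refuted2_down d a : refuted2 X d -> thm (Imp a d) -> refuted2 X a.
Proof.
  intros [H1 H2] T; split.
  - apply (box_congr (And d a)); auto. apply (thm_taut1 _ _ T); bool_tauto.
  - intros c; apply (box_congr (And d (And a c))); auto.
    apply (thm_taut1 _ _ T); bool_tauto.
Qed.

Lemma refuted2_or a b : refuted2 X a -> refuted2 X b -> refuted2 X (Or a b).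
Proof.
  intros [Ha Ha'] [Hb Hb']; split; [apply box_con; auto|].
  intros c. apply (box_congr (Or (And a c) (And b c))); [apply Ax_taut; bool_tauto|].
  apply box_con; auto.
Qed.

Lemma refuted2_list l : (forall y, In y l -> exists i, refuted2 X i /\ y = Neg i) ->
  exists d, refuted2 X d /\ thm (Imp (Neg d) (bigconj l)).
Proof.
  induction l as [|a l IH]; intros H.
  - exists Bot; split; [|apply Ax_taut; bool_tauto].
    split; [apply box_top_bot|]. intros b.
    apply (box_congr Bot); [apply Ax_taut; bool_tauto|apply box_top_bot].
  - destruct IH as [d [Hd T]]. { intros y Hy; apply H; simpl; auto. }
    destruct (H a (in_eq a l)) as [i [Hi ->]].
    exists (Or i d); split; [apply refuted2_or; auto|].
    apply (thm_taut1 _ _ T); bool_tauto.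
Qed.

Lemma refuted2_closed a :
  deducible (fun x => exists i, refuted2 X i /\ x = Neg i) (Neg a) -> refuted2 X a.
Proof.
  intros [l [Hl T]]. destruct (refuted2_list l Hl) as [d [Hd Td]].
  apply (refuted2_down d); auto. apply (thm_taut2 _ _ _ T Td); bool_tauto.
Qed.

End BoxParts.

Definition W : Type := {X : form -> Prop | maxcons X}.

Definition R1c (X Y : W) : Prop := forall a, forced1 (proj1_sig X) a -> proj1_sig Y a.
Definition R2c (X Y : W) : Prop :=
  forall a, refuted2 (proj1_sig X) a -> proj1_sig Y (Neg a).

Lemma R1_witness (Y : W) a : ~ forced1 (proj1_sig Y) a ->
  exists Z : W, R1c Y Z /\ ~ proj1_sig Z a.
Proof.
  intros Hn.
  destruct (lindenbaum (fun x => forced1 (proj1_sig Y) x \/ x = Neg a)) as [Z [HZ SZ]].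
  { intros Hd. apply Hn, (forced1_closed _ (proj2_sig Y)).
    apply (deducible_taut1 _ _ _ (deduction _ _ _ Hd)). bool_tauto. }
  exists (exist _ Z HZ); split; simpl.
  - intros b Hb; apply SZ; auto.
  - apply (maxcons_neg Z HZ), SZ; auto.
Qed.

Lemma R2_witness (Y : W) a : ~ refuted2 (proj1_sig Y) a ->
  exists Z : W, R2c Y Z /\ proj1_sig Z a.
Proof.
  intros Hn.
  destruct (lindenbaum (fun x => (exists i, refuted2 (proj1_sig Y) i /\ x = Neg i) \/ x = a))
    as [Z [HZ SZ]].
  { intros Hd. apply Hn, (refuted2_closed _ (proj2_sig Y)).
    apply (deducible_taut1 _ _ _ (deduction _ _ _ Hd)). bool_tauto. }
  exists (exist _ Z HZ); split; simpl.
  - intros i Hi; apply SZ; left; exists i; auto.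
  - apply SZ; auto.
Qed.

Lemma canonical_box (Y : W) a :
  proj1_sig Y (Bplus a) <->
  (forall Z, R1c Y Z -> proj1_sig Z a) \/ (forall Z, R2c Y Z -> ~ proj1_sig Z a).
Proof.
  destruct Y as [Y HY]; unfold R1c, R2c; simpl. split.
  - intros H. destruct (classic (forall b, Y (Bplus (Or a b)))) as [Hall|Hn].
    + left. intros Z HZ. apply HZ. split; auto.
    + apply not_all_ex_not in Hn. destruct Hn as [b0 Hb0].
      right. intros [Z HZ] HR Ha. simpl in *.
      assert (Ha' : Z (Neg a)).
      { apply HR. split; auto. intros c. destruct (box_dis Y HY a b0 c H); tauto. }
      apply (maxcons_neg Z HZ a); auto.
  - intros Hs. apply NNPP; intros Hn. destruct Hs as [H1|H2].
    + destruct (R1_witness (exist _ Y HY) a) as [Z [HR HZ]]; [intros [Ha _]; tauto|].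
      apply HZ, H1, HR.
    + destruct (R2_witness (exist _ Y HY) a) as [Z [HR HZ]]; [intros [Ha _]; tauto|].
      apply (H2 Z HR HZ).
Qed.

Definition canon (M0 : W) : model :=
  {| st := W; st_inh := M0; R1 := R1c; R2 := R2c;
     val := fun p X => proj1_sig X (Var p) |}.

Lemma truth (M0 : W) f : forall Y : W, sat (canon M0) Y f <-> proj1_sig Y f.
Proof.
  induction f as [p|a IH|a IHa b IHb|a IH]; intros Y; simpl.
  - tauto.
  - rewrite IH. symmetry; apply maxcons_neg, proj2_sig.
  - rewrite IHa, IHb. symmetry; apply maxcons_and, proj2_sig.
  - rewrite canonical_box. setoid_rewrite IH. tauto.
Qed.

(* Strong completeness: if Γ ⊬ φ, then Γ ∪ {¬φ} is consistent, and a maximal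
   consistent extension is a canonical state satisfying Γ but not φ. *)
Lemma completeness Gamma phi : conseq P Gamma phi -> derives P Gamma phi.
Proof.
  intros Hc. apply NNPP; intros Hnd.
  destruct (lindenbaum (fun x => Gamma x \/ x = Neg phi)) as [M [HM SM]].
  { intros Hd. apply Hnd, derives_deducible.
    apply (deducible_taut1 _ _ _ (deduction _ _ _ Hd)). bool_tauto. }
  pose (M0 := exist _ M HM : W).
  assert (Hp : proj1_sig M0 phi).
  { apply (truth M0 phi M0), Hc. intros g Hg. apply (truth M0 g M0). simpl; auto. }
  apply (maxcons_neg M HM phi); simpl in Hp; auto.
Qed.

End KBoxplus.

Theorem mainTheorem7 (P : Type) (p0 : P) (Gamma : form P -> Prop) (phi : form P) :
  derives P Gamma phi <-> conseq P Gamma phi.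
Proof.
  split; [apply sound_derives | apply (completeness P p0)].
Qed.
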